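(* Let $(X_n)_{n\ge0}$ be a real-valued process adapted to a filtration $(\mathcal F_n)$ with $\limsup_{n\to\infty}|X_n|=\infty$ a.s. Let $f:\mathbb R\to\mathbb R_+$ satisfy $\sup_x f(x)<\infty$, $\lim_{x\to+\infty}f(x)=0$, and $\inf_{y\le x}f(y)>0$ for every $x\in\mathbb R_+$. Suppose there exists $x_1\in\mathbb R_+$ such that for all $n\ge0$, $$\mathbb E[f(X_{n+1})-f(X_n)\mid\mathcal F_n]\le0\ \text{on }\{X_n>x_1\},\qquad \mathbb E[f(-X_{n+1})-f(-X_n)\mid\mathcal F_n]\le0\ \text{on }\{X_n<-x_1\}.$$ Then $\lim_{n\to\infty}X_n\in\{-\infty,+\infty\}$ a.s. *)

From HB Require Import structures.
From mathcomp Require Import all_boot all_order all_algebra.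
From mathcomp Require Import all_classical all_reals all_analysis.
Set Implicit Arguments. Unset Strict Implicit. Unset Printing Implicit Defensive.
Import Order.TTheory GRing.Theory Num.Theory.
Import numFieldNormedType.Exports.
Local Open Scope classical_set_scope.
Local Open Scope ring_scope.

Definition sub_sigma_algebra d (T : measurableType d) (G : set (set T)) :=
  sigma_algebra setT G /\ G `<=` measurable.

Definition filtration d (T : measurableType d) (F : nat -> set (set T)) :=
  (forall n, sub_sigma_algebra (F n)) /\ (forall n m, (n <= m)%N -> F n `<=` F m).

Definition G_measurable d (T : measurableType d) (R : realType)
  (G : set (set T)) (g : T -> R) :=
  forall B : set R, measurable B -> G (g @^-1` B).

Definition adapted d (T : measurableType d) (R : realType)
  (F : nat -> set (set T)) (X : nat -> T -> R) :=
  forall n, G_measurable (F n) (X n).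

Definition is_cond_exp d (T : measurableType d) (R : realType)
  (P : probability T R) (G : set (set T)) (Y g : T -> R) :=
  [/\ G_measurable G g,
      P.-integrable setT (EFin \o g) &
      forall A, G A ->
        (\int[P]_(x in A) (g x)%:E = \int[P]_(x in A) (Y x)%:E)%E].

(* Fix x >= x1, a level K > x above which f <= eps, and c > 0 with f >= c on
   (-oo, x].  Follow each path through three states: waiting to exceed K, above
   x ever since, back in (-oo, x].  The potential equal to eps, f(X_N), c in
   these states has nonincreasing expectation by the drift condition, so
   P(X exceeds K and later returns below x) <= eps / c.  Since f vanishes at
   +oo this is arbitrarily small: almost surely X is not unbounded above while
   returning below x infinitely often, i.e. X -> +oo wherever X is unbounded
   above.  The same holds for -X, and limsup |X_n| = +oo forces one of the two
   cases. *)

From HB Require Import structures.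
From mathcomp Require Import all_boot all_order all_algebra.
From mathcomp Require Import all_classical all_reals all_analysis.
From mathcomp Require Import measurable_realfun.
Set Implicit Arguments. Unset Strict Implicit. Unset Printing Implicit Defensive.
Import Order.TTheory GRing.Theory Num.Theory.
Import numFieldNormedType.Exports.
Local Open Scope classical_set_scope.
Local Open Scope ring_scope.

Section sigma_algebra_facts.
Context {T : Type} {G : set (set T)}.
Hypothesis sG : sigma_algebra setT G.

Lemma sigma_algebra_set0 : G set0. Proof. by case: sG. Qed.

Lemma sigma_algebra_setC A : G A -> G (~` A).
Proof. by case: sG => _ GC _ GA; rewrite -setTD; exact: GC. Qed.

Lemma sigma_algebra_bigcup (A : (set T)^nat) :
  (forall n, G (A n)) -> G (\bigcup_n A n).
Proof. by case: sG => _ _; apply. Qed.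

Lemma sigma_algebra_setU A B : G A -> G B -> G (A `|` B).
Proof.
move=> GA GB; rewrite -bigcup2E; apply: sigma_algebra_bigcup => -[|[|n]] //=.
exact: sigma_algebra_set0.
Qed.

Lemma sigma_algebra_setI A B : G A -> G B -> G (A `&` B).
Proof.
move=> GA GB; rewrite -[A `&` B]setCK setCI.
by apply/sigma_algebra_setC/sigma_algebra_setU; exact: sigma_algebra_setC.
Qed.

End sigma_algebra_facts.

Section adapted_facts.
Context {d : measure_display} {T : measurableType d} {R : realType}
  {F : nat -> set (set T)}.

Lemma filtration_measurable n A : filtration F -> F n A -> measurable A.
Proof. by move=> hF; exact: (hF.1 n).2. Qed.

Lemma adapted_measurable_fun (Y : nat -> T -> R) n :
  filtration F -> adapted F Y -> measurable_fun setT (Y n).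
Proof.
move=> hF hY _ B mB; rewrite setTI.
exact: filtration_measurable hF (hY n B mB).
Qed.

Lemma adaptedN (Y : nat -> T -> R) : adapted F Y -> adapted F (fun n w => - Y n w).
Proof.
move=> hY n B mB.
have mNB : measurable ((fun y : R => - y) @^-1` B).
  by rewrite -[_ @^-1` B]setTI; apply: measurable_funN => //; exact: measurable_id.
exact: hY n _ mNB.
Qed.

Lemma sigma_algebra_level_comp (G : set (set T)) (pv : T -> nat) (Y : T -> R)
    (h : nat -> R -> nat) :
  sigma_algebra setT G -> (forall j, G [set w | pv w = j]) -> G_measurable G Y ->
  (forall j, measurable_fun setT (h j)) ->
  forall k, G [set w | h (pv w) (Y w) = k].
Proof.
move=> sG Gpv mY mh k.
rewrite (_ : [set w | _] =
  \bigcup_j ([set w | pv w = j] `&` Y @^-1` (h j @^-1` [set k]))); last first.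
  by apply/seteqP; split=> [w /= <-|w [j _ [/= -> //]]]; exists (pv w).
apply: sigma_algebra_bigcup => // j; apply: sigma_algebra_setI => //.
by apply: mY; rewrite -[_ @^-1` _]setTI; exact: mh.
Qed.

End adapted_facts.

Lemma ae_le0_integral d (T : measurableType d) (R : realType)
    (mu : {measure set T -> \bar R}) (D : set T) (g : T -> R) :
  measurable D -> measurable_fun D g -> {ae mu, forall w, D w -> g w <= 0} ->
  (\int[mu]_(w in D) (g w)%:E <= 0)%E.
Proof.
move=> mD mg gle0.
have min0 w : - Num.min (g w) 0 >= 0 by rewrite oppr_ge0 ge_min lexx orbT.
rewrite (ae_eq_integral (fun w => (Num.min (g w) 0)%:E)) //.
- under eq_integral do rewrite -[X in X%:E]opprK EFinN.
  rewrite integral_ge0N => [|w _]; last by rewrite lee_fin.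
  by rewrite oppe_le0; apply: integral_ge0 => w _; rewrite lee_fin.
- exact/measurable_EFinP.
- apply/measurable_EFinP; apply: measurable_minr => //; exact: measurable_cst.
- by apply: filterS gle0 => w hw Dw; rewrite min_l // hw.
Qed.

(* The unconditional form of "E[f(Y_{n+1}) - f(Y_n) | F_n] <= 0 on {Y_n > a}". *)
Definition lyapunov_above d (T : measurableType d) (R : realType)
    (P : probability T R) (F : nat -> set (set T)) (Y : nat -> T -> R)
    (f : R -> R) (a : R) :=
  forall n A, F n A -> A `<=` [set w | a < Y n w] ->
  (\int[P]_(w in A) (f (Y n.+1 w))%:E <= \int[P]_(w in A) (f (Y n w))%:E)%E.

Lemma cond_exp_lyapunov_above d (T : measurableType d) (R : realType)
    (P : probability T R) (F : nat -> set (set T)) (Y : nat -> T -> R)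
    (f : R -> R) (a M : R) :
  filtration F -> adapted F Y -> measurable_fun setT f ->
  (forall y, 0 <= f y) -> (forall y, f y <= M) ->
  (forall n, exists g, is_cond_exp P (F n) (fun w => f (Y n.+1 w) - f (Y n w)) g /\
     {ae P, forall w, a < Y n w -> g w <= 0}) ->
  lyapunov_above P F Y f a.
Proof.
move=> hF hY mf f0 fM hdrift n A FA AY.
have [g [[mg _ g_cond] gle0]] := hdrift n.
have mA : measurable A := filtration_measurable hF FA.
have fY_int k : P.-integrable A (EFin \o (fun w => f (Y k w))).
  apply: measurable_bounded_integrable => //.
  - by apply: le_lt_trans (probability_le1 P mA) _; rewrite ltry.
  - apply: measurable_funS (measurableT_comp mf (adapted_measurable_fun k hF hY)) => //.
  - exists M; split; first exact: num_real.
    by move=> y My w _ /=; rewrite ger0_norm //; exact: ltW (le_lt_trans (fM _) My).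
have : (\int[P]_(w in A) (g w)%:E <= 0)%E.
  apply: ae_le0_integral => //.
    apply: (measurable_funS measurableT) => // _ B mB; rewrite setTI.
    exact: filtration_measurable hF (mg B mB).
  by apply: filterS gle0 => w hw Aw; exact/hw/AY.
rewrite g_cond //.
under eq_integral do rewrite EFinB.
by rewrite integralB_EFin // sube_le0.
Qed.

Lemma negligible_le_gt0 d (T : measurableType d) (R : realType)
    (mu : {measure set T -> \bar R}) (S : set T) :
  (forall e : R, 0 < e -> exists A, [/\ measurable A, S `<=` A & (mu A <= e%:E)%E]) ->
  mu.-negligible S.
Proof.
move=> small.
have /choice[A hA] : forall j, exists A,
    [/\ measurable A, S `<=` A & (mu A <= (harmonic j)%:E)%E].
  by move=> j; exact: small _ (harmonic_gt0 j).
have mA j : measurable (A j) by case: (hA j).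
exists (\bigcap_j A j); split; first exact: bigcapT_measurable.
  apply/eqP; rewrite eq_le measure_ge0 andbT -(cvg_lim _ cvge_harmonic) //.
  apply: lime_ge; first exact: cvgP cvge_harmonic.
  apply: nearW => j; have [_ _ muA] := hA j; apply: le_trans muA => /=.
  by apply: le_measure; rewrite ?inE //; [exact: bigcapT_measurable|exact: bigcap_inf].
by move=> w Sw j _; have [_ SA _] := hA j; exact: SA.
Qed.

Definition unbounded_above (R : numDomainType) (u : nat -> R) :=
  forall M, exists n, M < u n.

Lemma cvgry_eventually_gt (R : realType) (u : nat -> R) (a : R) :
  (forall k : nat, \forall n \near \oo, a + k%:R < u n) -> u @ \oo --> +oo.
Proof.
move=> ev_gt; apply/cvgryPgt => A; apply: filterS (ev_gt (Num.truncn (A - a)).+1).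
by move=> n; apply: le_lt_trans; rewrite -lerBlDl ltW // truncnS_gt.
Qed.

Lemma limn_esup_abs_unbounded (R : realType) (u : nat -> R) :
  limn_esup (fun n => (`|u n|)%:E) = +oo%E ->
  unbounded_above u \/ unbounded_above (fun n => - u n).
Proof.
move=> sup_abs.
have unb_abs : unbounded_above (fun n => `|u n|).
  move=> M; apply: contrapT => /forallNP abs_le.
  suff : (limn_esup (fun n => (`|u n|)%:E) <= M%:E)%E by rewrite sup_abs.
  rewrite limn_esup_lim; apply: lime_le; first exact: is_cvg_esups.
  apply: nearW => n; apply: ge_ereal_sup => _ [m _ <-].
  by rewrite lee_fin leNgt; apply/negP; exact: abs_le.
have [|/existsNP [M /forallNP u_le]] := pselect (unbounded_above u); [by left|right].
move=> A; have [n] := unb_abs (Num.max A M); rewrite gt_max => /andP[An Mn].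
exists n; have unM : u n <= M by rewrite leNgt; apply/negP; exact: u_le.
have [un0|un0] := ltP (u n) 0; first by rewrite ltr0_norm in An.
by move: Mn; rewrite ger0_norm // ltNge unM.
Qed.

Section return_after_exceeding.
Context {d : measure_display} {T : measurableType d} {R : realType}.
Variables (P : probability T R) (F : nat -> set (set T)) (Y : nat -> T -> R).
Variables (f : R -> R) (x1 : R).
Hypothesis hF : filtration F.
Hypothesis hY : adapted F Y.
Hypothesis mf : measurable_fun setT f.
Hypothesis f0 : forall y, 0 <= f y.
Hypothesis lyapY : lyapunov_above P F Y f x1.

Section automaton.
Variables (x K : R).

(* State 0: Y has not exceeded K yet; state 1: Y has exceeded K and stayed
   above x since; state 2 (absorbing): Y came back to (-oo, x] afterwards. *)
Definition step (j : nat) (y : R) : nat :=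
  match j with
  | 0 => if K < y then 1 else 0
  | 1 => if y <= x then 2 else 1
  | _ => 2
  end.

Fixpoint phase (N : nat) (w : T) : nat :=
  if N is M.+1 then step (phase M w) (Y N w) else step 0 (Y 0 w).

Lemma measurable_step j : measurable_fun setT (step j).
Proof.
case: j => [|[|j]] /=; last exact: measurable_cst.
all: apply: measurable_fun_ifT; try exact: measurable_cst.
- by apply: measurable_fun_ltr => //; exact: measurable_cst.
- by apply: measurable_fun_ler => //; exact: measurable_cst.
Qed.

Lemma phase_level_set N k : F N [set w | phase N w = k].
Proof.
elim: N k => [|N IH] k.
  have mS : measurable (step 0 @^-1` [set k]).
    by rewrite -[_ @^-1` _]setTI; exact: measurable_step.
  exact: hY 0 _ mS.
apply: sigma_algebra_level_comp => [|j||]; first exact: (hF.1 N.+1).1.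
- exact: hF.2 N N.+1 (leqnSn N) _ (IH j).
- exact: hY.
- exact: measurable_step.
Qed.

Lemma measurable_phase N k : measurable [set w | phase N w = k].
Proof. exact: filtration_measurable hF (phase_level_set N k). Qed.

Lemma step_le2 j y : (step j y <= 2)%N.
Proof. by case: j => [|[|j]] /=; repeat case: ifP. Qed.

Lemma phase_le2 N w : (phase N w <= 2)%N.
Proof. by case: N => *; exact: step_le2. Qed.

Lemma phase_leS N w : (phase N w <= phase N.+1 w)%N.
Proof.
rewrite [phase N.+1 w]/=; have := phase_le2 N w.
by case: (phase N w) => [|[|[|j]]] //= _; case: ifP.
Qed.

Lemma phase_le N M w : (N <= M)%N -> (phase N w <= phase M w)%N.
Proof.
move=> /subnK <-; elim: (M - N)%N => // k IH.
by rewrite addSn; exact: leq_trans IH (phase_leS _ _).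
Qed.

Hypothesis ltxK : x < K.

Lemma phase1_gt N w : phase N w = 1%N -> x < Y N w.
Proof.
case: N => [|N] /=; first by case: ifP => // /(lt_trans ltxK).
case: (phase N w) => [|[|j]] //=; case: ifP => //.
- by move=> /(lt_trans ltxK).
- by rewrite leNgt => /negbFE.
Qed.

Lemma exceed_then_return_phase2 n m w :
  K < Y n w -> (n < m)%N -> Y m w <= x -> phase m w = 2%N.
Proof.
move=> YnK; case: m => // m nm Ymx /=.
have : (0 < phase n w)%N.
  case: n YnK {nm} => [|n] /= YnK; first by rewrite YnK.
  have := phase_le2 n w.
  by case: (phase n w) => [|[|[|j]]] //= _; rewrite ?YnK //; case: ifP.
move=> /leq_trans /(_ (phase_le (N := n) (M := m) w nm)).
by have := phase_le2 m w; case: (phase m w) => [|[|[|j]]] //= _ _; rewrite Ymx.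
Qed.

Lemma oscillation_sub_returned w : (exists n, K < Y n w) ->
  ~ (\forall n \near \oo, x < Y n w) -> (\bigcup_N [set w | phase N w = 2%N]) w.
Proof.
move=> [n KY] not_ev; apply: contrapT => not_ret; apply: not_ev.
exists n.+1 => // m /= nm; rewrite ltNge; apply/negP => Ymx.
by apply: not_ret; exists m => //; exact: exceed_then_return_phase2 KY nm Ymx.
Qed.

Hypothesis lex1x : x1 <= x.
Variables (c eps : R).
Hypothesis c_gt0 : 0 < c.
Hypothesis c_le_f : forall y, y <= x -> c <= f y.
Hypothesis f_le_eps : forall y, K < y -> f y <= eps.

Definition potential N w : R :=
  if phase N w == 0%N then eps else if phase N w == 1%N then f (Y N w) else c.

Lemma eps_ge0 : 0 <= eps.
Proof. by apply: le_trans (f0 (K + 1)) _; apply: f_le_eps; rewrite ltrDl. Qed.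

Lemma potential_ge0 N w : 0 <= potential N w.
Proof.
rewrite /potential; case: ifP => _; first exact: eps_ge0.
by case: ifP => _ //; exact: ltW.
Qed.

Lemma potential0_le w : potential 0 w <= eps.
Proof. by rewrite /potential /=; case: (ltP K (Y 0 w)) => // KY; exact: f_le_eps. Qed.

Lemma potentialS_le_f N w : phase N w = 1%N -> potential N.+1 w <= f (Y N.+1 w).
Proof.
move=> ph1; rewrite /potential /= ph1 /=.
by case: (leP (Y N.+1 w) x) => // Yx; exact: c_le_f.
Qed.

Lemma potentialS_le N w : phase N w != 1%N -> potential N.+1 w <= potential N w.
Proof.
rewrite /potential /=; have := phase_le2 N w.
case: (phase N w) => [|[|[|j]]] //= _ _.
by case: (ltP K (Y N.+1 w)) => // KY; exact: f_le_eps.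
Qed.

Lemma measurable_potential N : measurable_fun setT (potential N).
Proof.
have mph k : measurable_fun setT (fun w => phase N w == k).
  apply: (measurable_fun_bool true); rewrite setTI.
  rewrite (_ : _ @^-1` _ = [set w | phase N w = k]); first exact: measurable_phase.
  by apply/seteqP; split => w /= /eqP.
apply: measurable_fun_ifT; [exact: mph|exact: measurable_cst|].
apply: measurable_fun_ifT; [exact: mph| |exact: measurable_cst].
exact: measurableT_comp mf (adapted_measurable_fun N hF hY).
Qed.

Local Open Scope ereal_scope.

Let measurable_fun_potential N D : measurable_fun D (EFin \o potential N).
Proof.
exact/(measurable_funS measurableT)/measurable_EFinP/measurable_potential.
Qed.

Let measurable_fun_fY N D : measurable_fun D (fun w => (f (Y N w))%:E).
Proof.
apply/(measurable_funS measurableT)/measurable_EFinP => //.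
exact: measurableT_comp mf (adapted_measurable_fun N hF hY).
Qed.

(* On {phase N = 1} this is the drift condition [lyapY]; elsewhere the
   potential does not increase pointwise. *)
Lemma expectation_potentialS_le N :
  \int[P]_w (potential N.+1 w)%:E <= \int[P]_w (potential N w)%:E.
Proof.
set A := [set w | phase N w = 1%N].
have mA : measurable A := measurable_phase N 1.
have pot_ge0 M D w : D w -> 0 <= (potential M w)%:E.
  by move=> _; rewrite lee_fin; exact: potential_ge0.
have splitA M : \int[P]_w (potential M w)%:E =
    \int[P]_(w in A) (potential M w)%:E + \int[P]_(w in ~` A) (potential M w)%:E.
  rewrite -(setUv A) ge0_integral_setU //; first exact: measurableC.
  - exact: measurable_fun_potential.
  - exact: pot_ge0.
  - by rewrite disj_set2E setICr.
rewrite !splitA; apply: leeD; last first.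
  apply: ge0_le_integral; [exact: measurableC|exact: pot_ge0|
    exact: measurable_fun_potential|exact: measurable_fun_potential|].
  by move=> w /= ph1; rewrite lee_fin; apply: potentialS_le; apply/eqP.
apply: (@le_trans _ _ (\int[P]_(w in A) (f (Y N.+1 w))%:E)).
  apply: ge0_le_integral; [by []|exact: pot_ge0|
    exact: measurable_fun_potential|exact: measurable_fun_fY|].
  by move=> w ph1; rewrite lee_fin; exact: potentialS_le_f.
apply: le_trans (lyapY (phase_level_set N 1) _) _.
  by move=> w /phase1_gt; exact: le_lt_trans.
apply: ge0_le_integral; [by []|by move=> w _; rewrite lee_fin|
  exact: measurable_fun_fY|exact: measurable_fun_potential|].
by move=> w ph1; rewrite /potential ph1.
Qed.

Lemma expectation_potential_le N : \int[P]_w (potential N w)%:E <= eps%:E.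
Proof.
elim: N => [|N IH]; last exact: le_trans (expectation_potentialS_le N) IH.
apply: (@le_trans _ _ (\int[P]_w (cst eps%:E) w)).
  apply: ge0_le_integral; [by []|by move=> w _; rewrite lee_fin potential_ge0|
    exact: measurable_fun_potential|exact: measurable_cst|].
  by move=> w _; rewrite lee_fin potential0_le.
by rewrite integral_cst //= (@probability_setT _ _ _ P) mule1.
Qed.

Lemma phase2_prob_le N : c%:E * P [set w | phase N w = 2%N] <= eps%:E.
Proof.
have mA := measurable_phase N 2.
rewrite -(integral_cst P mA); apply: le_trans (expectation_potential_le N).
apply: (@le_trans _ _ (\int[P]_(w in [set w | phase N w = 2%N]) (potential N w)%:E)).
  apply: ge0_le_integral; [by []|by move=> w _; rewrite lee_fin ltW|
    exact: measurable_cst|exact: measurable_fun_potential|].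
  by move=> w ph2; rewrite /potential ph2.
apply: ge0_subset_integral => //; first exact: measurable_fun_potential.
by move=> w _; rewrite lee_fin potential_ge0.
Qed.

Lemma returned_prob_le :
  P (\bigcup_N [set w | phase N w = 2%N]) <= (eps / c)%:E.
Proof.
have mA N := measurable_phase N 2.
have nd : nondecreasing_seq (fun N => [set w | phase N w = 2%N]).
  move=> N M NM; apply/subsetPset => w /= ph2; apply/eqP.
  by rewrite eqn_leq phase_le2 -{1}ph2; exact: phase_le.
have P_cvg := nondecreasing_cvg_mu (mu := P) mA (bigcupT_measurable _ mA) nd.
rewrite -(cvg_lim _ P_cvg) //; apply: lime_le; first exact: cvgP P_cvg.
apply: nearW => N; rewrite mulrC EFinM lee_pdivlMl //; exact: phase2_prob_le.
Qed.

End automaton.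

Lemma oscillation_negligible x : x1 <= x ->
  (exists2 c, 0 < c & forall y, y <= x -> c <= f y) ->
  f y @[y --> +oo] --> 0 ->
  P.-negligible [set w | unbounded_above (Y ^~ w) /\ ~ (\forall n \near \oo, x < Y n w)].
Proof.
move=> lex1x [c c_gt0 c_le_f] f_cvg0; apply: negligible_le_gt0 => e e_gt0.
have [K [ltxK f_le]] : exists K, x < K /\ forall y, K < y -> f y <= c * e.
  have [M [_ f_lt]] := cvgr_lt 0 f_cvg0 _ (mulr_gt0 c_gt0 e_gt0).
  exists (Num.max M x + 1); split=> [|y My]; first by rewrite ltr_pwDr // le_max lexx orbT.
  by apply/ltW/f_lt; apply: le_lt_trans My; rewrite ler_wpDr // le_max lexx.
exists (\bigcup_N [set w | phase x K N w = 2%N]); split.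
- by apply: bigcupT_measurable => N; exact: measurable_phase.
- by move=> w [unb not_ev]; apply: oscillation_sub_returned => //; exact: unb.
- apply: le_trans (returned_prob_le ltxK lex1x c_gt0 c_le_f f_le) _.
  by rewrite lee_fin mulrAC divff ?gt_eqF // mul1r.
Qed.

Lemma ae_unbounded_above_cvgry : 0 <= x1 ->
  (forall x, 0 <= x -> exists c, 0 < c /\ forall y, y <= x -> c <= f y) ->
  f y @[y --> +oo] --> 0 ->
  {ae P, forall w, unbounded_above (Y ^~ w) -> Y ^~ w @ \oo --> +oo}.
Proof.
move=> x1_ge0 f_lb f_cvg0.
have osc_negl (k : nat) := oscillation_negligible (x := x1 + k%:R).
have : {ae P, forall w (k : nat),
    ~ (unbounded_above (Y ^~ w) /\ ~ \forall n \near \oo, x1 + k%:R < Y n w)}.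
  apply: ae_foralln => k; apply: negligibleS (osc_negl k _ _ f_cvg0) => [w /=||].
  - exact: contrapT.
  - by rewrite lerDl.
  - by have [c [c_gt0 c_le]] := f_lb _ (addr_ge0 x1_ge0 (ler0n _ k)); exists c.
apply: filterS => w no_osc unb; apply: (cvgry_eventually_gt (a := x1)) => k.
by apply: contrapT => not_ev; exact: no_osc k (conj unb not_ev).
Qed.

End return_after_exceeding.

Theorem lemma3p5 (d : measure_display) (T : measurableType d) (R : realType)
  (P : probability T R) (F : nat -> set (set T)) (X : nat -> T -> R)
  (f : R -> R) (x1 : R) :
  filtration F ->
  adapted F X ->
  {ae P, forall w, limn_esup (fun n => (`|X n w|)%:E) = +oo%E} ->
  measurable_fun setT f ->
  (forall x, 0 <= f x) ->
  (exists M : R, forall x, f x <= M) ->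
  f x @[x --> +oo] --> (0 : R) ->
  (forall x : R, 0 <= x -> exists c : R, 0 < c /\ forall y, y <= x -> c <= f y) ->
  0 <= x1 ->
  (forall n : nat, exists g : T -> R,
      is_cond_exp P (F n) (fun w => f (X n.+1 w) - f (X n w)) g /\
      {ae P, forall w, x1 < X n w -> g w <= 0}) ->
  (forall n : nat, exists g : T -> R,
      is_cond_exp P (F n) (fun w => f (- X n.+1 w) - f (- X n w)) g /\
      {ae P, forall w, X n w < - x1 -> g w <= 0}) ->
  {ae P, forall w, (X ^~ w) @ \oo --> +oo \/ (X ^~ w) @ \oo --> -oo}.
Proof.
move=> hF hX sup_abs mf f0 [M fM] f_cvg0 f_lb x1_ge0 drift_pos drift_neg.
have lyapX := cond_exp_lyapunov_above hF hX mf f0 fM drift_pos.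
have lyapNX : lyapunov_above P F (fun n w => - X n w) f x1.
  apply: cond_exp_lyapunov_above hF (adaptedN hX) mf f0 fM _ => n.
  have [g [g_cond g_le0]] := drift_neg n; exists g; split => //.
  by apply: filterS g_le0 => w g_le0 ltx1X; apply: g_le0; rewrite ltrNr.
have cvgX := ae_unbounded_above_cvgry hF hX mf f0 lyapX x1_ge0 f_lb f_cvg0.
have cvgNX := ae_unbounded_above_cvgry hF (adaptedN hX) mf f0 lyapNX x1_ge0 f_lb f_cvg0.
move: sup_abs cvgX cvgNX; apply: filterS3 => w /limn_esup_abs_unbounded sup cvgX cvgNX.
by case: sup => [/cvgX|/cvgNX]; [left|right; apply/cvgNry].
Qed.
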